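(* Let $p$ be a prime and $m,n\in\mathbb{Z}$. Then ($n=m^2$, $p\nmid m$ and $p\nmid n$) if and only if $p\nmid m$, $p\nmid n$, and there exists $a\in\{\pm p^h: h\geq 1\}$ such that $m\mid a^2-1$, $n\mid a^2-1$ and $(a^8-m)\mid(a^{16}-n)$. Consequently, the collection of sets $\{(n,n^2): n\in\mathbb{Z},\ p\nmid n\}$, $p$ prime, is uniformly positive existentially definable in the class $\mathcal{D}=\{\mathfrak{D}_p: p\text{ prime}\}$ over the language $\{0,1,+,\mid,R,T\}$.
   Context: Divisibility $\mid$ is ordinary divisibility in $\mathbb{Z}$. For a prime $p$, $x\mid_p y$ means $y=\pm xp^s$ for some $s\in\mathbb{Z}$. $\mathfrak{D}_p=(\mathbb{Z};0,1,+,\mid,\mid_p,\mathbb{Z}\smallsetminus\{-1,0,1\})$, with $R$ interpreted as $\mid_p$ and $T$ as $\mathbb{Z}\smallsetminus\{-1,0,1\}$. Uniformly positive existentially definable means a single positive existential formula of the language defines the corresponding set in every $\mathfrak{D}_p$. *)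

From Stdlib Require Import ZArith Znumtheory.
Open Scope Z_scope.

(* x |_p y  :<->  y = +- x p^s for some s in Z.  For integers this means:
   for some s : nat, y = +- x p^s (s >= 0) or x = +- y p^s (s <= 0). *)
Definition pdiv (p x y : Z) : Prop :=
  exists s : nat,
    y = x * p ^ Z.of_nat s \/ y = - (x * p ^ Z.of_nat s) \/
    x = y * p ^ Z.of_nat s \/ x = - (y * p ^ Z.of_nat s).

Definition Tset (x : Z) : Prop := x <> -1 /\ x <> 0 /\ x <> 1.

Inductive term : Type :=
  | tVar : nat -> term
  | tZero : term
  | tOne : term
  | tPlus : term -> term -> term.

Inductive pef : Type :=
  | fEq : term -> term -> pef
  | fDiv : term -> term -> pef
  | fR : term -> term -> pef
  | fT : term -> pef
  | fAnd : pef -> pef -> pef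
  | fOr : pef -> pef -> pef
  | fEx : nat -> pef -> pef.

Fixpoint teval (env : nat -> Z) (t : term) : Z :=
  match t with
  | tVar i => env i
  | tZero => 0
  | tOne => 1
  | tPlus a b => teval env a + teval env b
  end.

Definition upd (env : nat -> Z) (i : nat) (v : Z) : nat -> Z :=
  fun j => if Nat.eqb j i then v else env j.

Fixpoint sat (p : Z) (env : nat -> Z) (f : pef) : Prop :=
  match f with
  | fEq a b => teval env a = teval env b
  | fDiv a b => Z.divide (teval env a) (teval env b)
  | fR a b => pdiv p (teval env a) (teval env b)
  | fT a => Tset (teval env a)
  | fAnd f g => sat p env f /\ sat p env g
  | fOr f g => sat p env f \/ sat p env g
  | fEx i f => exists v : Z, sat p (upd env i v) f
  end.

Definition unif_pe_definable2 (S : Z -> Z -> Z -> Prop) : Prop :=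
  exists phi : pef, forall p : Z, prime p ->
    forall env : nat -> Z, sat p env phi <-> S p (env 0%nat) (env 1%nat).

(* If a = +-p^h, then m and n divide a^2 - 1, so |m|, |n| < a^2, while a^8 - m divides
   (a^16 - n) - (a^8 - m)(a^8 + m) = m^2 - n, which is then too small to be nonzero;
   conversely Euler's theorem provides h with m^2 | p^h - 1.

   For the definition, a product w = z e with p not dividing z and e = +-p^s is captured
   positively by z |_p w, e | w and (z - 1) |_p (w - e).  With z = 2e - x and w = z e,
   e - x divides w - y iff it divides x^2 - y; choosing e with (8a - 1)(8a + 1) | e - 1
   makes |e| exceed |x^2 - y| whenever x and y divide a - 1. *)

From Stdlib Require Import ZArith Znumtheory Zpow_facts Lia.
From mathcomp Require ssrbool eqtype ssrnat div prime cyclic.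
From mathcomp Require Import zify.
Open Scope Z_scope.

Lemma Zdivide_of_dvdn (d m : nat) : div.dvdn d m = true -> (Z.of_nat d | Z.of_nat m).
Proof.
  intro H. destruct (ssrbool.elimT div.dvdnP H) as [k ->].
  exists (Z.of_nat k). lia.
Qed.

Lemma coprime_of_Zprime (p : Z) (n : nat) : prime p -> ~ (p | Z.of_nat n) ->
  div.coprime (Z.to_nat p) n = true.
Proof.
  intros Hp HpN. pose proof (prime_ge_2 p Hp) as Hp2.
  assert (Hg1 : (Z.of_nat (div.gcdn (Z.to_nat p) n) | p)).
  { replace p with (Z.of_nat (Z.to_nat p)) at 2 by lia. apply Zdivide_of_dvdn, div.dvdn_gcdl. }
  assert (Hg2 : (Z.of_nat (div.gcdn (Z.to_nat p) n) | Z.of_nat n))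
    by apply Zdivide_of_dvdn, div.dvdn_gcdr.
  apply (ssrbool.introT eqtype.eqP).
  generalize dependent (div.gcdn (Z.to_nat p) n); intros g Hg1 Hg2.
  destruct (prime_divisors p Hp _ Hg1) as [E|[E|[E|E]]]; try lia.
  rewrite E in Hg2. contradiction.
Qed.

Lemma exists_pow_dvdn_pred (a n : nat) :
  (0 < a)%nat -> div.coprime a n = true -> (0 < n)%nat ->
  exists t, (0 < t)%nat /\ div.dvdn n (ssrnat.subn (ssrnat.expn a t) 1) = true.
Proof.
  intros Ha Hcop Hn. exists (prime.totient n). split.
  - apply (ssrbool.elimT ssrnat.ltP). rewrite prime.totient_gt0. lia.
  - rewrite <- div.eqn_mod_dvd by (rewrite ssrnat.expn_gt0; lia).
    apply (ssrbool.introT eqtype.eqP), cyclic.Euler_exp_totient, Hcop.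
Qed.

Lemma exists_pow_cong1 (p N : Z) : prime p -> ~ (p | N) -> N <> 0 ->
  exists h, 1 <= h /\ (N | p ^ h - 1).
Proof.
  intros Hp HpN HN. pose proof (prime_ge_2 p Hp) as Hp2.
  assert (HpN' : ~ (p | Z.of_nat (Z.to_nat (Z.abs N)))).
  { rewrite Z2Nat.id, Z.divide_abs_r by lia. exact HpN. }
  destruct (exists_pow_dvdn_pred (Z.to_nat p) (Z.to_nat (Z.abs N)))
    as [t [Ht Hdvd]]; [lia | apply coprime_of_Zprime; assumption | lia |].
  exists (Z.of_nat t). split; [lia|].
  apply Zdivide_of_dvdn in Hdvd.
  apply Z.divide_abs_l. replace (Z.abs N) with (Z.of_nat (Z.to_nat (Z.abs N))) by lia.
  assert (Hpow : Z.of_nat (ssrnat.expn (Z.to_nat p) t) = p ^ Z.of_nat t).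
  { rewrite <- (Z2Nat.id p) at 2 by lia. lia. }
  assert (0 < p ^ Z.of_nat t) by (apply Z.pow_pos_nonneg; lia).
  replace (p ^ Z.of_nat t - 1)
    with (Z.of_nat (ssrnat.subn (ssrnat.expn (Z.to_nat p) t) 1)) by lia.
  exact Hdvd.
Qed.

Lemma abs_eq_mul_abs_cases (u v c : Z) : 0 <= c ->
  Z.abs u = Z.abs v * c -> u = v * c \/ u = - (v * c).
Proof.
  intros Hc E. apply Z.abs_eq_cases. rewrite Z.abs_mul, (Z.abs_eq c) by exact Hc. exact E.
Qed.

Lemma pdiv_abs (p x y : Z) : 0 <= p ->
  pdiv p x y <->
  exists s, 0 <= s /\ (Z.abs y = Z.abs x * p ^ s \/ Z.abs x = Z.abs y * p ^ s).
Proof.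
  intro Hp. split.
  - intros [s Hs]. exists (Z.of_nat s). split; [lia|].
    assert (Hps : Z.abs (p ^ Z.of_nat s) = p ^ Z.of_nat s)
      by (apply Z.abs_eq, Z.pow_nonneg; exact Hp).
    destruct Hs as [E|[E|[E|E]]]; subst;
      rewrite ?Z.abs_opp, Z.abs_mul, Hps; auto.
  - intros [s [Hs0 Hs]]. exists (Z.to_nat s). rewrite Z2Nat.id by exact Hs0.
    assert (Hps : 0 <= p ^ s) by (apply Z.pow_nonneg; exact Hp).
    destruct Hs as [E|E]; apply abs_eq_mul_abs_cases in E; tauto.
Qed.

Lemma pdiv_mul_pow_r (p x s : Z) : 0 <= s -> pdiv p x (x * p ^ s).
Proof. intro Hs. exists (Z.to_nat s). left. rewrite Z2Nat.id by exact Hs. reflexivity. Qed.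

Lemma mul_pow_cancel (p a b i j : Z) : 0 < p -> 0 <= i -> 0 <= j ->
  a * p ^ i = b * p ^ j -> exists k, 0 <= k /\ (a = b * p ^ k \/ b = a * p ^ k).
Proof.
  intros Hp Hi Hj E. assert (Hpi : p ^ i <> 0) by (apply Z.pow_nonzero; lia).
  assert (Hpj : p ^ j <> 0) by (apply Z.pow_nonzero; lia).
  destruct (Z.le_ge_cases i j) as [Hij|Hij].
  - exists (j - i). split; [lia|]. left. apply Z.mul_reg_r with (p ^ i); [exact Hpi|].
    rewrite E, <- Z.mul_assoc, <- Z.pow_add_r by lia. f_equal. f_equal. lia.
  - exists (i - j). split; [lia|]. right. apply Z.mul_reg_r with (p ^ j); [exact Hpj|].
    rewrite <- E, <- Z.mul_assoc, <- Z.pow_add_r by lia. f_equal. f_equal. lia.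
Qed.

Lemma pdiv_cancel_r (p x y y' r : Z) : 0 < p -> 0 <= r ->
  Z.abs y = Z.abs y' * p ^ r -> pdiv p x y -> pdiv p x y'.
Proof.
  intros Hp Hr Ey Hxy. apply pdiv_abs in Hxy; [|lia]. apply pdiv_abs; [lia|].
  destruct Hxy as [s [Hs [E|E]]]; rewrite Ey in E.
  - destruct (mul_pow_cancel p (Z.abs y') (Z.abs x) r s Hp Hr Hs E) as [k [Hk Ek]].
    exists k. auto.
  - exists (r + s). split; [lia|]. right. rewrite E, Z.pow_add_r by lia. ring.
Qed.

Lemma pdiv_abs_le (p x y : Z) : 0 < p -> ~ (p | y) -> pdiv p x y -> Z.abs y <= Z.abs x.
Proof.
  intros Hp Hy Hxy. apply pdiv_abs in Hxy as [s [Hs [E|E]]]; [| |lia].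
  - destruct (Z.eq_dec s 0) as [->|Hs0]; [lia|].
    exfalso. apply Hy, Z.divide_abs_r. rewrite E.
    apply Z.divide_mul_r, Zpower_divide. lia.
  - assert (1 <= p ^ s) by (pose proof (Z.pow_pos_nonneg p s); lia). nia.
Qed.

Lemma pdiv_coprime_l (p x y : Z) : 0 < p -> ~ (p | x) -> pdiv p x y ->
  exists q, 0 <= q /\ Z.abs y = Z.abs x * p ^ q.
Proof.
  intros Hp Hx Hxy. apply pdiv_abs in Hxy as [s [Hs [E|E]]]; [eauto| |lia].
  destruct (Z.eq_dec s 0) as [->|Hs0].
  - exists 0. split; lia.
  - exfalso. apply Hx, Z.divide_abs_r. rewrite E.
    apply Z.divide_mul_r, Zpower_divide. lia.
Qed.

Lemma pdiv_one_Tset (p a : Z) : 0 < p -> pdiv p 1 a -> Tset a ->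
  exists r, 1 <= r /\ Z.abs a = p ^ r.
Proof.
  intros Hp H1a Ta. apply pdiv_abs in H1a as [s [Hs [E|E]]]; [| |lia].
  - exists s. destruct (Z.eq_dec s 0) as [->|Hs0]; [unfold Tset in Ta; lia|].
    split; lia.
  - exfalso. assert (1 <= p ^ s) by (pose proof (Z.pow_pos_nonneg p s); lia).
    unfold Tset in Ta. nia.
Qed.

Lemma not_pdiv_pred_succ (p z : Z) : 1 < p -> 4 <= Z.abs z -> ~ pdiv p (z - 1) (z + 1).
Proof.
  intros Hp Hz H. apply pdiv_abs in H as [s [Hs E]]; [|lia].
  assert (Hps : s = 0 \/ 2 <= p ^ s).
  { destruct (Z.eq_dec s 0) as [|Hs0]; [auto|]. right.
    pose proof (Zpower_gt_1 p s Hp ltac:(lia)). lia. }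
  destruct Hps as [->|Hps]; [rewrite !Z.mul_1_r in E|]; nia.
Qed.

Lemma pow_le_of_divide (p r q c : Z) : prime p -> 0 <= r -> 0 <= q -> ~ (p | c) ->
  (p ^ r | c * p ^ q) -> r <= q.
Proof.
  intros Hp Hr Hq Hc H. pose proof (prime_ge_2 p Hp).
  apply Gauss in H;
    [|apply rel_prime_sym, rel_prime_Zpower_r, rel_prime_sym, prime_rel_prime; assumption].
  apply Zdivide_bounds in H; [|apply Z.pow_nonzero; lia].
  rewrite !Z.abs_eq in H by (apply Z.pow_nonneg; lia).
  apply Z.pow_le_mono_r_iff in H; lia.
Qed.

Lemma pdiv_mul_unique (p z f w : Z) : prime p -> ~ (p | z) -> 4 <= Z.abs z ->
  (exists r, 1 <= r /\ Z.abs f = p ^ r) ->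
  pdiv p z w -> (f | w) -> pdiv p (z - 1) (w - f) -> w = z * f.
Proof.
  intros Hp Hz Hz4 [r [Hr Hf]] Hzw Hfw Hg. pose proof (prime_ge_2 p Hp) as Hp2.
  destruct (pdiv_coprime_l p z w ltac:(lia) Hz Hzw) as [q [Hq Hw]].
  assert (Hrq : r <= q).
  { apply (pow_le_of_divide p r q (Z.abs z)); [exact Hp|lia|lia| |].
    - rewrite Z.divide_abs_r. exact Hz.
    - rewrite <- Hf, <- Hw, Z.divide_abs_l, Z.divide_abs_r. exact Hfw. }
  assert (Hwzf : Z.abs w = Z.abs (z * f) * p ^ (q - r)).
  { rewrite Hw, Z.abs_mul, Hf, <- Z.mul_assoc, <- Z.pow_add_r by lia. f_equal. f_equal. lia. }
  assert (Hsign : exists eps, (eps = 1 \/ eps = -1) /\ w = eps * (z * f * p ^ (q - r))).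
  { apply abs_eq_mul_abs_cases in Hwzf; [|apply Z.pow_nonneg; lia].
    destruct Hwzf; [exists 1|exists (-1)]; split; lia. }
  destruct Hsign as [eps [Heps Ew]].
  (* With d := q - r, either d = 0 and the wrong sign makes (z - 1) |_p (z + 1), or d > 0
     and the cofactor B = (w - f) / f is prime to p, so (z - 1) |_p B bounds |B| by
     |z - 1|, although |B| >= 2|z| - 1. *)
  destruct (Z.eq_dec q r) as [Eqr|Hqr].
  - rewrite Eqr, Z.sub_diag, Z.mul_1_r in Ew.
    destruct Heps as [-> | ->]; [lia|exfalso].
    apply (not_pdiv_pred_succ p z); [lia|exact Hz4|].
    apply (pdiv_cancel_r p (z - 1) (w - f) (z + 1) r); [lia|lia| |exact Hg].
    replace (w - f) with (- ((z + 1) * f)) by (rewrite Ew; ring).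
    rewrite Z.abs_opp, Z.abs_mul, Hf. reflexivity.
  - exfalso. set (B := eps * z * p ^ (q - r) - 1).
    assert (HB : ~ (p | B)).
    { intro HpB. enough (H1 : (p | 1)) by (apply Z.divide_1_r_abs in H1; lia).
      replace 1 with (eps * z * p ^ (q - r) - B) by (unfold B; ring).
      apply Z.divide_sub_r; [|exact HpB].
      apply Z.divide_mul_r, Zpower_divide. lia. }
    assert (HBz : Z.abs B <= Z.abs (z - 1)).
    { apply (pdiv_abs_le p (z - 1) B); [lia|exact HB|].
      apply (pdiv_cancel_r p (z - 1) (w - f) B r); [lia|lia| |exact Hg].
      replace (w - f) with (B * f) by (unfold B; rewrite Ew; ring).
      rewrite Z.abs_mul, Hf. reflexivity. }
    assert (2 <= p ^ (q - r)) by (pose proof (Zpower_gt_1 p (q - r)); lia).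
    unfold B in HBz. destruct Heps; subst eps; nia.
Qed.

Lemma divide_lt_abs_eq0 (d x : Z) : (d | x) -> Z.abs x < Z.abs d -> x = 0.
Proof.
  intros Hd Hlt. destruct (Z.eq_dec x 0) as [|Hx]; [assumption|].
  apply Zdivide_bounds in Hd; lia.
Qed.

Lemma divide_mul_of_rel_prime (a b n : Z) : rel_prime a b -> (a | n) -> (b | n) -> (a * b | n).
Proof.
  intros Hab [k ->] Hb. rewrite Z.mul_comm in Hb.
  apply Gauss in Hb; [|apply rel_prime_sym, Hab].
  destruct Hb as [j ->]. exists j. ring.
Qed.

Lemma exists_pow_sq_cong1 (p x : Z) : prime p -> ~ (p | x) ->
  exists h, 1 <= h /\ (x ^ 2 | p ^ h - 1).
Proof.
  intros Hp Hx. apply exists_pow_cong1; [exact Hp| |].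
  - rewrite Z.pow_2_r. intro H. apply prime_mult in H; tauto.
  - intro E. apply Z.pow_eq_0 in E; [|lia]. subst x. apply Hx, Z.divide_0_r.
Qed.

Lemma prime_not_divide_pred (p a : Z) : prime p -> (p | a) -> ~ (p | a - 1).
Proof.
  intros Hp Ha H. pose proof (prime_ge_2 p Hp).
  enough (H1 : (p | 1)) by (apply Z.divide_1_r_abs in H1; lia).
  replace 1 with (a - (a - 1)) by ring. apply Z.divide_sub_r; assumption.
Qed.

Lemma square_iff_exists_ppow (p m n : Z) : prime p ->
  (n = m ^ 2 /\ ~ (p | m) /\ ~ (p | n)) <->
  (~ (p | m) /\ ~ (p | n) /\
   exists a, (exists h, 1 <= h /\ (a = p ^ h \/ a = - p ^ h)) /\
     (m | a ^ 2 - 1) /\ (n | a ^ 2 - 1) /\ (a ^ 8 - m | a ^ 16 - n)).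
Proof.
  intro Hp. pose proof (prime_ge_2 p Hp) as Hp2. split.
  - intros (Hn & Hm & Hpn). repeat split; [exact Hm|exact Hpn|].
    destruct (exists_pow_sq_cong1 p m Hp Hm) as [h [Hh Hd]].
    assert (Hsq : (m ^ 2 | (p ^ h) ^ 2 - 1)).
    { apply Z.divide_trans with (p ^ h - 1); [exact Hd|]. exists (p ^ h + 1). ring. }
    exists (p ^ h). subst n. repeat split.
    + exists h. auto.
    + apply Z.divide_trans with (m ^ 2); [exists m; ring|exact Hsq].
    + exact Hsq.
    + exists ((p ^ h) ^ 8 + m). ring.
  - intros (Hm & Hpn & a & (h & Hh & Ha) & Hma & Hna & Hd). repeat split; try assumption.
    assert (HB : 4 <= a ^ 2).
    { assert (2 <= p ^ h) by (pose proof (Zpower_gt_1 p h); lia).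
      replace (a ^ 2) with (p ^ h * p ^ h) by (destruct Ha; subst a; ring). nia. }
    assert (Hm1 : Z.abs m <= a ^ 2 - 1)
      by (pose proof (Zdivide_bounds _ _ Hma ltac:(lia)); lia).
    assert (Hn1 : Z.abs n <= a ^ 2 - 1)
      by (pose proof (Zdivide_bounds _ _ Hna ltac:(lia)); lia).
    enough (m ^ 2 - n = 0) by lia.
    apply (divide_lt_abs_eq0 (a ^ 8 - m)).
    + replace (m ^ 2 - n) with ((a ^ 16 - n) - (a ^ 8 - m) * (a ^ 8 + m)) by ring.
      apply Z.divide_sub_r; [exact Hd|apply Z.divide_factor_l].
    + replace (a ^ 8) with (a ^ 2 * a ^ 2 * (a ^ 2 * a ^ 2)) by ring.
      set (B := a ^ 2) in *.
      assert (Hmm : m ^ 2 <= (B - 1) * (B - 1)).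
      { rewrite Z.pow_2_r, <- Z.abs_square. apply Z.mul_le_mono_nonneg; lia. }
      assert (Hm0 : 0 <= m ^ 2) by (rewrite Z.pow_2_r; apply Z.square_nonneg).
      assert (HB4 : B * B <= B * B * (B * B)) by (clear - HB; nia).
      assert (HB2 : 4 * B <= B * B) by (clear - HB; nia).
      replace ((B - 1) * (B - 1)) with (B * B - 2 * B + 1) in Hmm by ring.
      clear - Hmm Hm0 HB4 HB2 Hm1 Hn1 HB.
      lia.
Qed.

Definition square_witness (p x y a e w : Z) : Prop :=
  pdiv p 1 a /\ Tset a /\ (x | a - 1) /\ (y | a - 1) /\
  pdiv p 1 e /\ Tset e /\ (8 * a - 1 | e - 1) /\ (8 * a + 1 | e - 1) /\
  pdiv p (2 * e - x) w /\ (e | w) /\ pdiv p (2 * e - x - 1) (w - e) /\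
  (e - x | w - y).

Lemma square_witness_sound (p x y a e w : Z) : prime p ->
  square_witness p x y a e w -> y = x ^ 2 /\ ~ (p | x).
Proof.
  intros Hp (Ha & Ta & Hxa & Hya & He & Te & He1 & He2 & Hzw & Hew & Hg & Hfin).
  pose proof (prime_ge_2 p Hp) as Hp2.
  destruct (pdiv_one_Tset p a ltac:(lia) Ha Ta) as [r [Hr Har]].
  destruct (pdiv_one_Tset p e ltac:(lia) He Te) as [s [Hs Hes]].
  assert (Hpa : (p | a)) by (apply Z.divide_abs_r; rewrite Har; apply Zpower_divide; lia).
  assert (Hpe : (p | e)) by (apply Z.divide_abs_r; rewrite Hes; apply Zpower_divide; lia).
  assert (Hpx : ~ (p | x))
    by (intro Hpx; apply (prime_not_divide_pred p a Hp Hpa), Z.divide_trans with x; assumption).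
  split; [|exact Hpx].
  assert (Ha2 : 2 <= Z.abs a) by (rewrite Har; pose proof (Zpower_gt_1 p r); lia).
  assert (Hx : Z.abs x <= Z.abs a + 1)
    by (pose proof (Zdivide_bounds _ _ Hxa ltac:(lia)); lia).
  assert (Hy : Z.abs y <= Z.abs a + 1)
    by (pose proof (Zdivide_bounds _ _ Hya ltac:(lia)); lia).
  assert (He64 : 64 * (Z.abs a * Z.abs a) - 2 <= Z.abs e).
  { assert (Hprod : ((8 * a - 1) * (8 * a + 1) | e - 1)).
    { apply divide_mul_of_rel_prime; [|assumption|assumption].
      apply bezout_rel_prime, (Bezout_intro _ _ _ (- (4 * a + 1)) (4 * a)). ring. }
    apply Zdivide_bounds in Hprod; [|unfold Tset in Te; lia].
    rewrite Z.abs_square. clear - Hprod Ha2. nia. }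
  assert (Hz : ~ (p | 2 * e - x)).
  { intro H. apply Hpx. replace x with (2 * e - (2 * e - x)) by ring.
    apply Z.divide_sub_r; [apply Z.divide_mul_r; exact Hpe|exact H]. }
  assert (Hw : w = (2 * e - x) * e).
  { apply (pdiv_mul_unique p); try assumption; [clear - He64 Hx Ha2; nia|eauto]. }
  enough (x ^ 2 - y = 0) by lia.
  apply (divide_lt_abs_eq0 (e - x)).
  - replace (x ^ 2 - y) with ((w - y) - (e - x) * (2 * e + x)) by (rewrite Hw; ring).
    apply Z.divide_sub_r; [exact Hfin|apply Z.divide_factor_l].
  - assert (Hxx : x ^ 2 <= (Z.abs a + 1) * (Z.abs a + 1)).
    { rewrite Z.pow_2_r, <- Z.abs_square. apply Z.mul_le_mono_nonneg; lia. }
    assert (0 <= x ^ 2) by (rewrite Z.pow_2_r; apply Z.square_nonneg).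
    clear - Hxx He64 Hx Hy Ha2. nia.
Qed.

Lemma square_witness_complete (p x : Z) : prime p -> ~ (p | x) ->
  exists a e w, square_witness p x (x ^ 2) a e w.
Proof.
  intros Hp Hx. pose proof (prime_ge_2 p Hp) as Hp2.
  destruct (exists_pow_sq_cong1 p x Hp Hx) as [h [Hh Hxa]].
  set (a := p ^ h).
  assert (Ha2 : 2 <= a) by (pose proof (Zpower_gt_1 p h); unfold a; lia).
  destruct (exists_pow_cong1 p ((8 * a - 1) * (8 * a + 1))) as [s [Hs Hea]];
    [exact Hp| |nia|].
  { replace ((8 * a - 1) * (8 * a + 1)) with (64 * a * a - 1) by ring.
    apply prime_not_divide_pred; [exact Hp|].
    apply Z.divide_mul_r, Zpower_divide. lia. }
  set (e := p ^ s).
  assert (He2 : 2 <= e) by (pose proof (Zpower_gt_1 p s); unfold e; lia).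
  exists a, e, ((2 * e - x) * e). unfold square_witness. repeat split; try lia.
  - rewrite <- (Z.mul_1_l a). apply pdiv_mul_pow_r. lia.
  - apply Z.divide_trans with (x ^ 2); [exists x; ring|exact Hxa].
  - exact Hxa.
  - rewrite <- (Z.mul_1_l e). apply pdiv_mul_pow_r. lia.
  - apply Z.divide_trans with ((8 * a - 1) * (8 * a + 1)); [apply Z.divide_factor_l|].
    exact Hea.
  - apply Z.divide_trans with ((8 * a - 1) * (8 * a + 1)); [apply Z.divide_factor_r|].
    exact Hea.
  - apply pdiv_mul_pow_r. lia.
  - apply Z.divide_factor_r.
  - replace ((2 * e - x) * e - e) with ((2 * e - x - 1) * p ^ s) by (unfold e; ring).
    apply pdiv_mul_pow_r. lia.
  - exists (2 * e + x). ring.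
Qed.

Definition times8 (t : term) : term :=
  tPlus t (tPlus t (tPlus t (tPlus t (tPlus t (tPlus t (tPlus t t)))))).

(* Variables 0 and 1 are x and y; the witnesses are 2 = a, 4 = e, 10 = w, and the
   others name differences, since the language has no subtraction:
   3 = a - 1, 5 = e - 1, 6 = 8a - 1, 7 = 8a + 1, 8 = z := 2e - x, 9 = z - 1,
   11 = w - e, 12 = e - x, 13 = w - y. *)
Definition square_body : pef :=
  fAnd (fR tOne (tVar 2)) (fAnd (fT (tVar 2))
  (fAnd (fEq (tPlus (tVar 3) tOne) (tVar 2))
  (fAnd (fDiv (tVar 0) (tVar 3)) (fAnd (fDiv (tVar 1) (tVar 3))
  (fAnd (fR tOne (tVar 4)) (fAnd (fT (tVar 4))
  (fAnd (fEq (tPlus (tVar 5) tOne) (tVar 4))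
  (fAnd (fEq (tPlus (tVar 6) tOne) (times8 (tVar 2)))
  (fAnd (fEq (tVar 7) (tPlus (times8 (tVar 2)) tOne))
  (fAnd (fDiv (tVar 6) (tVar 5)) (fAnd (fDiv (tVar 7) (tVar 5))
  (fAnd (fEq (tPlus (tVar 8) (tVar 0)) (tPlus (tVar 4) (tVar 4)))
  (fAnd (fEq (tPlus (tVar 9) tOne) (tVar 8))
  (fAnd (fR (tVar 8) (tVar 10)) (fAnd (fDiv (tVar 4) (tVar 10))
  (fAnd (fEq (tPlus (tVar 11) (tVar 4)) (tVar 10))
  (fAnd (fR (tVar 9) (tVar 11))
  (fAnd (fEq (tPlus (tVar 12) (tVar 0)) (tVar 4))
  (fAnd (fEq (tPlus (tVar 13) (tVar 1)) (tVar 10))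
        (fDiv (tVar 12) (tVar 13))))))))))))))))))))).

Definition square_formula : pef :=
  fEx 2 (fEx 3 (fEx 4 (fEx 5 (fEx 6 (fEx 7
  (fEx 8 (fEx 9 (fEx 10 (fEx 11 (fEx 12 (fEx 13 square_body))))))))))).

Lemma sat_square_formula (p : Z) (env : nat -> Z) :
  sat p env square_formula <->
  exists a e w, square_witness p (env 0%nat) (env 1%nat) a e w.
Proof.
  unfold square_formula, square_body, times8. simpl. unfold upd. simpl.
  set (x := env 0%nat). set (y := env 1%nat). split.
  - intros (a & a1 & e & e1 & u & v & z & z1 & w & w1 & d & c & H).
    exists a, e, w.
    destruct H as (Ha & Ta & Ea1 & Hxa & Hya & He & Te & Ee1 & Eu & Ev & Hu & Hv
                   & Ez & Ez1 & Hzw & Hew & Ew1 & Hg & Ed & Ec & Hdc).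
    replace a1 with (a - 1) in * by lia. replace e1 with (e - 1) in * by lia.
    replace u with (8 * a - 1) in * by lia. replace v with (8 * a + 1) in * by lia.
    replace z with (2 * e - x) in * by lia. replace z1 with (2 * e - x - 1) in * by lia.
    replace w1 with (w - e) in * by lia. replace d with (e - x) in * by lia.
    replace c with (w - y) in * by lia.
    unfold square_witness; tauto.
  - unfold square_witness.
    intros (a & e & w & Ha & Ta & Hxa & Hya & He & Te & Hu & Hv & Hzw & Hew & Hg & Hfin).
    exists a, (a - 1), e, (e - 1), (8 * a - 1), (8 * a + 1), (2 * e - x), (2 * e - x - 1),
      w, (w - e), (e - x), (w - y).
    repeat split; try assumption; unfold Tset in *; lia.
Qed.

Theorem lemma4p11 :
  (forall p m n : Z, prime p ->
     ((n = m ^ 2 /\ ~ Z.divide p m /\ ~ Z.divide p n) <->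
      (~ Z.divide p m /\ ~ Z.divide p n /\
       exists a : Z, (exists h : Z, 1 <= h /\ (a = p ^ h \/ a = - p ^ h)) /\
         Z.divide m (a ^ 2 - 1) /\ Z.divide n (a ^ 2 - 1) /\
         Z.divide (a ^ 8 - m) (a ^ 16 - n))))
  /\
  unif_pe_definable2 (fun p x y => y = x ^ 2 /\ ~ Z.divide p x).
Proof.
  split.
  - exact square_iff_exists_ppow.
  - exists square_formula. intros p Hp env. rewrite sat_square_formula. split.
    + intros (a & e & w & Hw). exact (square_witness_sound p _ _ a e w Hp Hw).
    + intros [-> Hx]. exact (square_witness_complete p _ Hp Hx).
Qed.
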